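(* Let $G$ be a complete graph on $n$ vertices and let $f_0,f_t$ be token-placements of $G$ such that $D(f_0,f_t)$ has a cycle cover. Let $|\mathcal{C}^*(f_0,f_t)|$ denote the maximum number of cycles in a cycle cover of $D(f_0,f_t)$. Then $\mathrm{OPT}(f_0,f_t)\ge n-|\mathcal{C}^*(f_0,f_t)|$. (Together with the upper bound, $\mathrm{OPT}(f_0,f_t)=n-|\mathcal{C}^*(f_0,f_t)|$.)
   Context: A token-placement of $G=(V,E)$ with colors $C=\{1,\dots,c\}$ is a surjective map $f\colon V\to C$. Two distinct token-placements $f,f'$ are adjacent if there is an edge $uv\in E$ with $f'(u)=f(v)$, $f'(v)=f(u)$ and $f'(w)=f(w)$ for all other $w$. A swapping sequence between $f$ and $f'$ is a sequence $f_1=f,\dots,f_h=f'$ of token-placements with consecutive members adjacent; its length is $h-1$; $\mathrm{OPT}(f,f')$ is the minimum length of such a sequence. The destination graph $D(f,f_t)$ is the directed graph on vertex set $V$ with an arc $(u,v)$ (for all $u,v\in V$, including $u=v$) whenever $f(u)=f_t(v)$. A (vertex-disjoint) cycle cover of a directed graph is a set of vertex-disjoint directed cycles (self-loops count as cycles of length 1) covering every vertex. *)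

From mathcomp Require Import all_boot all_order all_fingroup.
Set Implicit Arguments. Unset Strict Implicit. Unset Printing Implicit Defensive.

(* Vertices V = 'I_n, colors C = 'I_c (c colors, relabelled 0..c-1). *)

Definition complete_edge (n : nat) : rel 'I_n := fun u v => u != v.

Definition token_placement (n c : nat) (f : {ffun 'I_n -> 'I_c}) : bool :=
  [forall k : 'I_c, exists v : 'I_n, f v == k].

Definition swap_adj (n c : nat) (f g : {ffun 'I_n -> 'I_c}) : bool :=
  (f != g) &&
  [exists u : 'I_n, exists v : 'I_n,
     [&& complete_edge u v, g u == f v, g v == f u &
         [forall w : 'I_n, ((w != u) && (w != v)) ==> (g w == f w)]]].

(* A swapping sequence f_1 = f, ..., f_h = f' is encoded as f :: s with
   s = [:: f_2; ...; f_h]; its length h-1 is size s. *)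
Definition swapping_seq (n c : nat) (f f' : {ffun 'I_n -> 'I_c})
    (s : seq {ffun 'I_n -> 'I_c}) : Prop :=
  [/\ all (@token_placement n c) (f :: s),
      path (@swap_adj n c) f s & last f s = f'].

Definition dest_arc (n c : nat) (f ft : {ffun 'I_n -> 'I_c}) (u v : 'I_n) : bool :=
  f u == ft v.

(* A vertex-disjoint cycle cover of D(f,ft) is encoded by the permutation s of V
   sending each vertex to its successor on its cycle; all arcs (u, s u) must lie
   in D(f,ft). Its cycles are the orbits of s (fixed points = self-loops). *)
Definition is_cycle_cover (n c : nat) (f ft : {ffun 'I_n -> 'I_c})
    (s : {perm 'I_n}) : bool :=
  [forall u : 'I_n, dest_arc f ft u (s u)].

Definition num_cycles (n : nat) (s : {perm 'I_n}) : nat := #|porbits s|.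

Definition max_cycles (n c : nat) (f ft : {ffun 'I_n -> 'I_c}) : nat :=
  \max_(s : {perm 'I_n} | is_cycle_cover f ft s) num_cycles s.

From mathcomp Require Import all_boot all_order all_fingroup.
From mathcomp Require Import zify.

(* The identity is a cycle cover of D(ft, ft) with n cycles. If f and g differ
   by the swap along uv, then a cycle cover s of D(g, ft) yields the cycle cover
   (uv) * s of D(f, ft), and multiplying by a transposition merges or splits
   one cycle. Walking a swapping sequence backwards from ft therefore produces
   a cycle cover of D(f0, ft) with at least n - h cycles. *)

Lemma num_cycles1 n : num_cycles (1 : {perm 'I_n}) = n.
Proof.
have orbit1 : porbit (1 : {perm 'I_n}) =1 set1.
  move=> x; apply/setP => y; rewrite inE.
  apply/porbitP/eqP => [[i ->]|->]; last by exists 0; rewrite expg0 perm1.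
  by rewrite expg1n perm1.
rewrite /num_cycles /porbits (eq_imset _ orbit1) card_imset ?card_ord //.
exact: set1_inj.
Qed.

Lemma num_cycles_tpermM n (s : {perm 'I_n}) u v :
  num_cycles s <= (num_cycles (tperm u v * s)).+1.
Proof.
have [<-|neq_uv] := eqVneq u v; first by rewrite tperm1 mul1g.
have := porbits_mul_tperm s u v; rewrite neq_uv -addnn /num_cycles.
move: #|porbits (tperm u v * s)| #|porbits s| => a b.
by case: (u \notin _); lia.
Qed.

Lemma swap_adj_tperm n c (f g : {ffun 'I_n -> 'I_c}) :
  swap_adj f g -> exists u v, f =1 g \o tperm u v.
Proof.
case/andP=> _ /existsP[u /existsP[v /and4P[_ /eqP gu /eqP gv /forallP gw]]].
exists u, v => x /=; case: tpermP => [->|->|/eqP xu /eqP xv] //.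
by have := gw x; rewrite xu xv => /eqP.
Qed.

Lemma cycle_cover1 n c (f : {ffun 'I_n -> 'I_c}) : is_cycle_cover f f 1.
Proof. by apply/forallP => u; rewrite /dest_arc perm1. Qed.

Lemma cycle_coverM n c (f g ft : {ffun 'I_n -> 'I_c}) (p s : {perm 'I_n}) :
  f =1 g \o p -> is_cycle_cover g ft s -> is_cycle_cover f ft (p * s).
Proof.
move=> fgp /forallP cov; apply/forallP => u.
by rewrite /dest_arc permM fgp; apply: cov.
Qed.

Lemma swapping_path_cycle_cover n c (f : {ffun 'I_n -> 'I_c}) s :
  path (@swap_adj n c) f s ->
  exists2 sg : {perm 'I_n}, is_cycle_cover f (last f s) sg
                          & n <= num_cycles sg + size s.
Proof.
elim: s f => [|g s IHs] f /=.
  by exists 1%g; rewrite ?cycle_cover1 ?num_cycles1 ?addn0.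
case/andP=> /swap_adj_tperm[u [v fg]] /IHs[sg cov le_n].
exists (tperm u v * sg)%g; first exact: cycle_coverM cov.
by rewrite (leq_trans le_n) // addnS -addSn leq_add2r num_cycles_tpermM.
Qed.

Lemma num_cycles_le_max n c (f ft : {ffun 'I_n -> 'I_c}) (s : {perm 'I_n}) :
  is_cycle_cover f ft s -> num_cycles s <= max_cycles f ft.
Proof. exact: (leq_bigmax_cond (F := @num_cycles n)). Qed.

Theorem mainTheorem15 (n c : nat) (f0 ft : {ffun 'I_n -> 'I_c})
  (H0 : token_placement f0) (Ht : token_placement ft)
  (Hcc : exists s : {perm 'I_n}, is_cycle_cover f0 ft s)
  (s : seq {ffun 'I_n -> 'I_c}) (Hs : swapping_seq f0 ft s) :
  n - max_cycles f0 ft <= size s.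
Proof.
case: Hs => _ /swapping_path_cycle_cover[sg /num_cycles_le_max le_max le_n] <-.
by rewrite leq_subLR (leq_trans le_n) // leq_add2r.
Qed.
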